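(* Let $d$ be even, let $\nu:\mathbb R\to\mathbb R$ satisfy $\nu(x+y)=\nu(x)+\nu(y)$ for all $x,y$, and let $A\in\mathbb R^{d\times d}$ be invertible. Suppose $S(x):=AQ_d^\nu(x)A^{-1}$ is an orthogonal matrix for every $x\ge0$ (with respect to the standard inner product on $\mathbb R^d$). Then there exists an orthogonal matrix $U\in\mathbb R^{d\times d}$ such that $S(x)=UQ_d^\nu(x)U^{\mathrm T}$ for all $x\ge0$.
   Context: For $\theta\in\mathbb R$, $Q(\theta)=\begin{pmatrix}\cos\theta&\sin\theta\\-\sin\theta&\cos\theta\end{pmatrix}$, and for even $k$, $Q_k^\nu(x)\in\mathbb R^{k\times k}$ is the block-diagonal matrix with $k/2$ diagonal blocks all equal to $Q(\nu(x))$. *)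

From HB Require Import structures.
From mathcomp Require Import all_boot all_order all_algebra.
From mathcomp Require Import all_classical all_reals all_analysis.
Set Implicit Arguments. Unset Strict Implicit. Unset Printing Implicit Defensive.
Import Order.TTheory GRing.Theory Num.Theory.
Local Open Scope ring_scope.

Definition Q2 (R : realType) (t : R) : 'M[R]_2 :=
  \matrix_(i < 2, j < 2)
    (if (i == j) then cos t else if (i == 0 :> nat) then sin t else - sin t).

(* Q_d^nu(x): block diagonal d x d matrix with d/2 blocks Q(nu x);
   entry (i,j) lies in block i./2 = j./2, at position (i mod 2, j mod 2). *)
Definition Qd (R : realType) (d : nat) (nu : R -> R) (x : R) : 'M[R]_d :=
  \matrix_(i < d, j < d)
    (if (i./2 == j./2)%N
     then Q2 (nu x) (inord (odd i)) (inord (odd j))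
     else 0).

Definition orthogonal_mx (R : realType) (d : nat) (M : 'M[R]_d) : Prop :=
  M *m M^T = 1%:M.

From HB Require Import structures.
From mathcomp Require Import all_boot all_order all_algebra.
From mathcomp Require Import all_classical all_reals all_analysis.
From mathcomp Require Import zify ring lra.
Import Order.TTheory GRing.Theory Num.Theory.
Local Open Scope ring_scope.
Set Implicit Arguments. Unset Strict Implicit. Unset Printing Implicit Defensive.

(* Write Q_d(x) = cos (nu x) I + sin (nu x) J, where J is the standard
   complex structure of R^d (block diagonal with blocks [[0,1],[-1,0]]),
   so J^2 = -I.  Put K = A J A^-1; then S(x) = A Q_d(x) A^-1 is the affine
   combination cos (nu x) I + sin (nu x) K, and K^2 = -I.
   - If sin (nu x) = 0 for every x >= 0, every S(x) is a scalar matrix and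
     U = I works.
   - Otherwise fix x0 >= 0 with s = sin (nu x0) <> 0.  The inverse of
     S(x0) = c I + s K is c I - s K, and also S(x0)^T = c I + s K^T, so
     orthogonality of S(x0) forces K^T = -K: K is an orthogonal complex
     structure.  Such a K is orthogonally conjugate to J: an orthonormal
     basis w_0, w_0 K, w_2, w_2 K, ... is built by a Gram-Schmidt type
     induction, and with U the matrix of columns w_i we get K = U J U^T.
     Conjugating the affine formula by U gives S(x) = U Q_d(x) U^T. *)

(* The index paired with i by the blocks of J: i+1 for even i, i-1 for odd i. *)
Definition partner (i : nat) : nat := if odd i then i.-1 else i.+1.

Lemma odd_partner i : odd (partner i) = ~~ odd i.
Proof. by rewrite /partner; case: i => [|i] //=; case oi: (odd i); rewrite /= ?oi. Qed.

Lemma partnerK i : partner (partner i) = i.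
Proof. by rewrite {1}/partner odd_partner /partner; case: i => [|i] //=; case: (odd i). Qed.

Lemma partner_lt_double k i : (i < k.*2)%N -> (partner i < k.*2)%N.
Proof. by rewrite /partner; have := odd_double_half i; case: (odd i) => /=; lia. Qed.

Lemma eqn_half_odd i j : (i == j) = (i./2 == j./2) && (odd i == odd j).
Proof.
have := odd_double_half i; have := odd_double_half j.
by case: (odd i); case: (odd j) => /=; lia.
Qed.

Lemma eqn_partner i j : (j == partner i) = (i./2 == j./2) && (odd i != odd j).
Proof.
rewrite /partner; have := odd_double_half i; have := odd_double_half j.
by case: (odd i); case: (odd j) => /=; lia.
Qed.

Section StandardComplexStructure.
Variable R : realType.
Variable d : nat.
Hypothesis d_even : ~~ odd d.

Lemma double_half_even : (d./2).*2 = d.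
Proof. by rewrite -[RHS]odd_double_half (negbTE d_even). Qed.

Lemma partner_lt (i : 'I_d) : (partner i < d)%N.
Proof.
by case: i => i /=; rewrite -double_half_even; apply: partner_lt_double.
Qed.

Definition partner_ord (i : 'I_d) : 'I_d := Ordinal (partner_lt i).

Definition J : 'M[R]_d :=
  \matrix_(i, j) if (j : nat) == partner i then (-1) ^+ odd i else 0.

Lemma J_mull (X : 'M[R]_d) i j : (J *m X) i j = (-1) ^+ odd i * X (partner_ord i) j.
Proof.
rewrite mxE (bigD1 (partner_ord i)) //= big1 ?addr0 => [|l nl]; rewrite mxE ?eqxx //.
by rewrite ifF ?mul0r // -[partner i]/(val (partner_ord i)) (inj_eq val_inj) (negbTE nl).
Qed.

Lemma J_sqr : J *m J = - 1%:M.
Proof.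
apply/matrixP => i j; rewrite J_mull !mxE /= partnerK odd_partner signrN.
rewrite -(inj_eq val_inj) eq_sym /=.
by case: eqP => _; rewrite ?mulr0 ?oppr0 // mulrN -expr2 sqrr_sign.
Qed.

Lemma QdE (nu : R -> R) x : Qd d nu x = cos (nu x) *: 1%:M + sin (nu x) *: J.
Proof.
apply/matrixP => i j; rewrite !mxE eqn_partner.
have -> : (i == j) = (i./2 == j./2)%N && (odd i == odd j) by exact: eqn_half_odd.
case: (i./2 == j./2)%N; last by rewrite /= !mulr0 addr0.
rewrite -!(inj_eq val_inj) /= !inordK ?ltnS ?leq_b1 //.
by case: (odd i); case: (odd j) => /=; rewrite ?mulr1 ?mulr0 ?addr0 ?add0r ?mulrN1.
Qed.

End StandardComplexStructure.

Arguments J {R d}.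

Section OrthonormalFrames.
Variable R : realType.
Variable d : nat.

Definition dot (u v : 'rV[R]_d) : R := (u *m v^T) 0 0.

Lemma dotC u v : dot u v = dot v u.
Proof. by rewrite /dot -[u *m v^T]trmxK trmx_mul trmxK mxE. Qed.

Lemma dotZl a u v : dot (a *: u) v = a * dot u v.
Proof. by rewrite /dot -scalemxAl mxE. Qed.

Lemma dotNl u v : dot (- u) v = - dot u v.
Proof. by rewrite /dot mulNmx mxE. Qed.

Lemma dot_mulmxr u v (M : 'M[R]_d) : dot u (v *m M) = dot (u *m M^T) v.
Proof. by rewrite /dot trmx_mul mulmxA. Qed.

Lemma mulmx_tr_dot m p (W : 'M[R]_(m, d)) (V : 'M[R]_(p, d)) i j :
  (W *m V^T) i j = dot (row i W) (row j V).
Proof. by rewrite /dot !mxE; apply: eq_bigr => l _; rewrite !mxE. Qed.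

Lemma dot_gt0 v : v != 0 -> 0 < dot v v.
Proof.
have term_ge0 l : 0 <= v 0 l * v^T l 0 by rewrite mxE -expr2 sqr_ge0.
move=> v_neq0; rewrite lt_def /dot mxE sumr_ge0 // andbT psumr_eq0 //.
apply: contra v_neq0 => /allP v_eq0; apply/eqP/rowP => l; rewrite mxE.
by have := v_eq0 l (mem_index_enum l); rewrite mxE mulf_eq0 orbb => /eqP.
Qed.

Definition orthonormal (n : nat) (f : nat -> 'rV[R]_d) : Prop :=
  forall i j, (i < n)%N -> (j < n)%N -> dot (f i) (f j) = (i == j)%:R.

Definition extend (f : nat -> 'rV[R]_d) (n : nat) (u : 'rV[R]_d) : nat -> 'rV[R]_d :=
  fun i => if i == n then u else f i.

Lemma orthonormal_extend n f u :
  orthonormal n f -> (forall i, (i < n)%N -> dot (f i) u = 0) -> dot u u = 1 ->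
  orthonormal n.+1 (extend f n u).
Proof.
move=> f_on u_orth u_unit i j; rewrite /extend !ltnS [(i <= n)%N]leq_eqVlt [(j <= n)%N]leq_eqVlt.
case/orP=> [/eqP->|i_lt]; case/orP=> [/eqP->|j_lt]; rewrite ?eqxx.
- by rewrite u_unit.
- by rewrite (ltn_eqF j_lt) dotC u_orth // gtn_eqF.
- by rewrite (ltn_eqF i_lt) u_orth // ltn_eqF.
- by rewrite (ltn_eqF i_lt) (ltn_eqF j_lt) f_on.
Qed.

(* Fewer than d vectors are orthogonal to some unit vector: the matrix with these
   rows and a zero row is singular, and a normalized kernel vector works. *)
Lemma orthogonal_unit_exists n (f : nat -> 'rV[R]_d) : (n < d)%N ->
  exists u, dot u u = 1 /\ forall i, (i < n)%N -> dot (f i) u = 0.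
Proof.
move=> n_lt_d.
pose F : 'M[R]_d := \matrix_(i, j) if (i < n)%N then f i 0 j else 0.
have F_singular : \det F^T == 0.
  rewrite det_tr (expand_det_row _ (Ordinal n_lt_d)) big1 // => j _.
  by rewrite mxE ltnn mul0r.
have [v v_neq0 vF] := det0P F_singular.
have v_pos := dot_gt0 v_neq0.
exists ((Num.sqrt (dot v v))^-1 *: v); split.
  rewrite dotZl dotC dotZl mulrA -expr2 exprVn sqr_sqrtr ?ltW //.
  by rewrite mulVf // gt_eqF.
move=> i i_lt_n; pose k := Ordinal (ltn_trans i_lt_n n_lt_d).
have row_F : row k F = f i by apply/rowP => j; rewrite !mxE i_lt_n.
have /rowP/(_ k) := vF; rewrite mulmx_tr_dot row_id row_F mxE => v_orth.
by rewrite dotC dotZl v_orth mulr0.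
Qed.

End OrthonormalFrames.

Section ComplexStructure.
Variable R : realType.
Variable d : nat.
Variable K : 'M[R]_d.
Hypothesis K_skew : K^T = - K.
Hypothesis K_sqr : K *m K = - 1%:M.

Lemma dot_skew u : dot u (u *m K) = 0.
Proof.
have : dot u (u *m K) = - dot u (u *m K).
  by rewrite {1}dot_mulmxr K_skew mulmxN dotNl dotC.
lra.
Qed.

Lemma dot_mulK u v : dot (u *m K) (v *m K) = dot u v.
Proof. by rewrite dot_mulmxr K_skew mulmxN -mulmxA K_sqr mulmxN mulmx1 opprK. Qed.

Definition K_frame (k : nat) (f : nat -> 'rV[R]_d) : Prop :=
  orthonormal k.*2 f /\
  forall i, (i < k.*2)%N -> f i *m K = (-1) ^+ odd i *: f (partner i).

(* The span of a K-frame is K-stable, so its orthogonal complement is too. *)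
Lemma K_frame_orthogonal k f u : K_frame k f ->
  (forall i, (i < k.*2)%N -> dot (f i) u = 0) ->
  forall i, (i < k.*2)%N -> dot (f i) (u *m K) = 0.
Proof.
move=> [_ fK] u_orth i i_lt.
by rewrite dot_mulmxr K_skew mulmxN dotNl fK // dotZl u_orth ?partner_lt_double // mulr0 oppr0.
Qed.

(* Gram-Schmidt step: extend a K-frame by a unit vector u orthogonal to it and u K. *)
Lemma K_frame_step k f : K_frame k f -> (k.*2 < d)%N -> exists g, K_frame k.+1 g.
Proof.
move=> fr lt_d; have [f_on fK] := fr.
have [u [u_unit u_orth]] := orthogonal_unit_exists f lt_d.
exists (extend (extend f k.*2 u) k.*2.+1 (u *m K)); split.
  rewrite doubleS; apply: orthonormal_extend; first exact: orthonormal_extend.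
    move=> i; rewrite ltnS leq_eqVlt /extend => /predU1P[->|i_lt].
      by rewrite eqxx dot_skew.
    by rewrite ltn_eqF // (K_frame_orthogonal fr).
  by rewrite dot_mulK.
move=> i; rewrite doubleS ltnS leq_eqVlt /extend /partner.
case/predU1P=> [->|]; last rewrite ltnS leq_eqVlt => /predU1P[->|i_lt].
- rewrite eqxx oddS odd_double /= (ltn_eqF (ltnSn _)) eqxx.
  by rewrite -mulmxA K_sqr mulmxN mulmx1 expr1 scaleN1r.
- by rewrite odd_double (ltn_eqF (ltnSn _)) !eqxx scale1r.
- have := partner_lt_double i_lt; rewrite /partner => p_lt.
  by rewrite (ltn_eqF i_lt) (ltn_eqF (leqW i_lt)) (ltn_eqF p_lt) (ltn_eqF (leqW p_lt)) fK.
Qed.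

Lemma K_frame_exists k : (k.*2 <= d)%N -> exists f, K_frame k f.
Proof.
elim: k => [_|k IH k_le]; first by exists (fun=> 0); split.
have k_lt : (k.*2 < d)%N by apply: leq_trans k_le; rewrite doubleS leqnSn.
have [f fr] := IH (ltnW k_lt).
exact: K_frame_step fr k_lt.
Qed.

Hypothesis d_even : ~~ odd d.

(* The columns of U form a full K-frame, so U^T K U = J. *)
Theorem complex_structure_normal_form : exists U, orthogonal_mx U /\ K = U *m J *m U^T.
Proof.
have [f [f_on fK]] := K_frame_exists (eq_leq (double_half_even d_even)).
rewrite double_half_even // in f_on fK.
pose W : 'M[R]_d := \matrix_(i, j) f i 0 j.
have row_W i : row i W = f i by apply/rowP => j; rewrite !mxE.
have W_orth : W *m W^T = 1%:M.
  by apply/matrixP => i j; rewrite mulmx_tr_dot !row_W f_on // mxE.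
have W_conj : W *m K *m W^T = J.
  apply/matrixP => i j; rewrite mulmx_tr_dot row_mul !row_W fK // dotZl f_on ?partner_lt //.
  by rewrite !mxE eq_sym; case: eqP; rewrite ?mulr1 ?mulr0.
exists W^T; split; first by rewrite /orthogonal_mx trmxK; apply: mulmx1C.
by rewrite -W_conj trmxK !mulmxA (mulmx1C W_orth) mul1mx -mulmxA (mulmx1C W_orth) mulmx1.
Qed.

End ComplexStructure.

Lemma conj_affine (R : realType) n (X Y M : 'M[R]_n) (c s : R) : X *m Y = 1%:M ->
  X *m (c *: 1%:M + s *: M) *m Y = c *: 1%:M + s *: (X *m M *m Y).
Proof. by move=> XY; rewrite mulmxDr mulmxDl -!scalemxAr -!scalemxAl mulmx1 XY. Qed.

(* If K^2 = -I and c I + s K (with c^2 + s^2 = 1, s <> 0) is orthogonal, then K is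
   skew: the transpose of c I + s K is its inverse c I - s K. *)
Lemma skew_of_orthogonal_rotation (R : realType) n (K : 'M[R]_n) (c s : R) :
  K *m K = - 1%:M -> c ^+ 2 + s ^+ 2 = 1 -> s != 0 ->
  orthogonal_mx (c *: 1%:M + s *: K) -> K^T = - K.
Proof.
move=> K_sqr cs_unit s_neq0 S_orth.
set S := c *: 1%:M + s *: K in S_orth.
have S_inv : S *m (c *: 1%:M - s *: K) = 1%:M.
  rewrite mulmxBr !mulmxDl -!scalemxAl -!scalemxAr !mul1mx mulmx1 K_sqr.
  apply/matrixP => i j; rewrite !mxE -[RHS]mul1r -cs_unit; ring.
have S_tr : S^T = c *: 1%:M - s *: K.
  by rewrite -[LHS]mul1mx -{1}(mulmx1C S_inv) -mulmxA S_orth mulmx1.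
move: S_tr; rewrite raddfD /= !linearZ /= trmx1 => /addrI.
exact: scalerI.
Qed.

Theorem mainTheorem10 (R : realType) (d : nat) (nu : R -> R) (A : 'M[R]_d) :
  ~~ odd d ->
  (forall x y : R, nu (x + y) = nu x + nu y) ->
  A \in unitmx ->
  (forall x : R, 0 <= x -> orthogonal_mx (A *m Qd d nu x *m invmx A)) ->
  exists U : 'M[R]_d, orthogonal_mx U /\
    forall x : R, 0 <= x -> A *m Qd d nu x *m invmx A = U *m Qd d nu x *m U^T.
Proof.
move=> d_even _ A_unit S_orth.
pose K := A *m J *m invmx A.
have S_affine x : A *m Qd d nu x *m invmx A = cos (nu x) *: 1%:M + sin (nu x) *: K.
  by rewrite QdE // conj_affine ?mulmxV.
have [[x0 [x0_ge0 s0_neq0]] | sin_eq0] := pselect (exists x, 0 <= x /\ sin (nu x) != 0).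
  have K_sqr : K *m K = - 1%:M.
    by rewrite /K !mulmxA mulmxKV // -(mulmxA A) J_sqr // mulmxN mulmx1 mulNmx mulmxV //.
  have K_skew : K^T = - K.
    apply: (skew_of_orthogonal_rotation K_sqr (cos2Dsin2 _) s0_neq0).
    by rewrite -S_affine; apply: S_orth.
  have [U [U_orth K_eq]] := complex_structure_normal_form K_skew K_sqr d_even.
  exists U; split => // x x_ge0.
  by rewrite S_affine QdE // conj_affine // -K_eq.
exists 1%:M; split => [|x x_ge0]; first by rewrite /orthogonal_mx trmx1 mulmx1.
have s_eq0 : sin (nu x) = 0.
  by apply/eqP; apply: contrapT => s_neq0; apply: sin_eq0; exists x; split => //; apply/negP.
by rewrite S_affine trmx1 mulmx1 mul1mx QdE // s_eq0 !scale0r !addr0.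
Qed.
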